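(* For every $n\ge5$, the quasisymmetric functions $F(T)$, where $T$ ranges over the (pairwise non-isomorphic) unlabelled rooted trees on $n$ vertices, are linearly dependent.
   Context: For a rooted tree $T$, a $T$-partition is a function $f$ from the vertices to $\mathbb{N}=\{1,2,\dots\}$ with $f(u)<f(w)$ whenever $w$ is the parent of $u$, and $F(T)=\sum_f\prod_u x_{f(u)}$ over all $T$-partitions, a quasisymmetric formal power series in $x_1,x_2,\dots$ depending only on the isomorphism class of $T$. *)

From mathcomp Require Import all_boot all_order all_algebra all_fingroup.
Set Implicit Arguments. Unset Strict Implicit. Unset Printing Implicit Defensive.

(* A rooted tree on the vertex set 'I_n is given by its parent function:
   p v = Some w  means w is the parent of v;  p v = None  means v is the root. *)
Definition parent_fun (n : nat) := {ffun 'I_n -> option 'I_n}.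

(* Exactly one root, and walking up from any vertex reaches the root
   (no cycles): after n steps of "go to parent" one has left the tree. *)
Definition is_rooted_tree (n : nat) (p : parent_fun n) : bool :=
  [exists r : 'I_n, [forall v : 'I_n, (p v == None) == (v == r)]] &&
  [forall v : 'I_n, iter n (obind p) (Some v) == None].

Definition rtree_iso (n : nat) (p q : parent_fun n) : bool :=
  [exists s : {perm 'I_n}, [forall v : 'I_n, q (s v) == omap s (p v)]].

(* A monomial x_1^{a_1} x_2^{a_2} ... x_k^{a_k} is represented by the
   sequence [:: a_1; ...; a_k] (trailing zeros allowed).  A function
   f : 'I_n -> 'I_k encodes the map u |-> (f u).+1 into {1,...,k}. *)
Definition is_Tpartition (n k : nat) (p : parent_fun n)
    (f : {ffun 'I_n -> 'I_k}) : bool :=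
  [forall u : 'I_n, forall w : 'I_n, (p u == Some w) ==> (f u < f w)].

(* Coefficient of the monomial m in F(T) = sum_f prod_u x_{f(u)}:
   the number of T-partitions f with |f^{-1}(i)| = a_i for all i. *)
Definition coefF (n : nat) (p : parent_fun n) (m : seq nat) : nat :=
  #|[set f : {ffun 'I_n -> 'I_(size m)} |
      is_Tpartition p f &&
      [forall i : 'I_(size m), #|[set u : 'I_n | f u == i]| == nth 0 m i]]|.

(* For a tree S on {0,...,4} rooted at 4, let S+ be S with a path of n - 5 further
   vertices stacked above its root.  For the five shapes A,...,E below,
   F(B+) + F(C+) + F(E+) = F(A+) + 2 F(D+).  A T-partition of S+ is an S-partition of
   the five bottom vertices plus conditions (the path increases, the bottom values lie
   below the value of vertex 5, and the content is prescribed) which are unchanged when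
   the five bottom vertices are relabelled by a permutation.  Averaging over S_5 reduces
   the identity to: for every h : {0,...,4} -> nat, the number of s in S_5 for which
   h o s is a partition of B, of C or of E equals the corresponding number for A, D, D.
   This depends only on the order type of h, i.e. on its rank vector in {0,...,4}^5, so
   it is a finite computation.  The five trees are pairwise non-isomorphic, being
   distinguished by their numbers of leaves and of leaves with exactly one sibling. *)

From mathcomp Require Import all_boot all_order all_algebra all_fingroup.
From mathcomp Require Import zify lra.
Set Implicit Arguments. Unset Strict Implicit. Unset Printing Implicit Defensive.

Lemma is_TpartitionE n k (p : parent_fun n) (f : {ffun 'I_n -> 'I_k}) :
  is_Tpartition p f = [forall u, if p u is Some w then f u < f w else true].
Proof.
apply/forallP/forallP => f_part u.
  by case pu: (p u) => [w|] //; have := forallP (f_part u) w; rewrite pu eqxx.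
by apply/forallP => w; apply/implyP => /eqP pu; have := f_part u; rewrite pu.
Qed.

Lemma iter_parent_increasing n (p : parent_fun n) :
  (forall v w, p v = Some w -> v < w) -> forall v, iter n (obind p) (Some v) = None.
Proof.
move=> p_gt v.
have iter_ge k : if iter k (obind p) (Some v) is Some w then v + k <= w else true.
  elim: k => [|k IHk] /=; first by rewrite addn0.
  case: (iter k _ _) IHk => [w|] //= le_w.
  by case pw: (p w) => [w'|] //; have := p_gt _ _ pw; lia.
by have := iter_ge n; case: (iter n _ _) => // w; have := ltn_ord w; lia.
Qed.

Section IsoInvariants.
Variable n : nat.
Implicit Types p q : parent_fun n.

Definition nchildren p (w : 'I_n) : nat := #|[set u | p u == Some w]|.

Definition leaf_count p : nat := #|[set w | nchildren p w == 0]|.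

Definition one_sibling_leaf_count p : nat :=
  #|[set w | (nchildren p w == 0) && (if p w is Some w' then nchildren p w' == 2 else false)]|.

Lemma rtree_iso_invariants p q : rtree_iso p q ->
  leaf_count p = leaf_count q /\ one_sibling_leaf_count p = one_sibling_leaf_count q.
Proof.
case/existsP => s /forallP /(_ _) /eqP s_iso.
have nchildren_s w : nchildren q (s w) = nchildren p w.
  rewrite /nchildren -(card_preimset _ (@perm_inj _ s)); apply: eq_card => u.
  rewrite !inE s_iso; case: (p u) => [x|] //=.
  by apply/eqP/eqP => [[/perm_inj ->] | [->]].
split; rewrite -[RHS](card_preimset _ (@perm_inj _ s)); apply: eq_card => w.
  by rewrite !inE nchildren_s.
by rewrite !inE s_iso nchildren_s; case: (p w) => [x|] //=; rewrite nchildren_s.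
Qed.

End IsoInvariants.

Lemma card_set_ord_below n (P : pred 'I_n.+1) b : b <= n.+1 -> (forall w, P w -> w < b) ->
  #|[set w | P w]| = count (fun i => P (inord i)) (iota 0 b).
Proof.
move=> b_le P_lt; rewrite -sum1dep_card.
rewrite (eq_bigl (fun i : 'I_n.+1 => P (inord i))) => [|i]; last by rewrite inord_val.
rewrite -(big_mkord (fun i => P (inord i)) (fun _ => 1)) sum1_count /index_iota subn0.
rewrite -(subnKC b_le) iotaD count_cat add0n.
rewrite (@eq_in_count _ _ pred0 (iota b _)) ?count_pred0 ?addn0 //.
move=> i; rewrite mem_iota => /andP[i_ge i_lt] /=; apply/negbTE/negP => /P_lt.
by rewrite inordK; lia.
Qed.

Definition perm_seq n (s : {perm 'I_n}) : seq nat := [seq val (s i) | i <- enum 'I_n].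

Lemma nth_perm_seq n (s : {perm 'I_n}) (i : 'I_n) : nth 0 (perm_seq s) i = s i.
Proof. by rewrite (nth_map i) ?size_enum_ord // nth_ord_enum. Qed.

Lemma perm_seq_permutations n :
  perm_eq (map (@perm_seq n) (enum {perm 'I_n})) (permutations (iota 0 n)).
Proof.
have seq_inj : injective (@perm_seq n).
  move=> s1 s2 eq12; apply/permP => i.
  by have := congr1 (nth 0 ^~ i) eq12; rewrite /= !nth_perm_seq => /val_inj.
have perm_seq_iota (s : {perm 'I_n}) : perm_eq (perm_seq s) (iota 0 n).
  rewrite -val_enum_ord /perm_seq (map_comp val s); apply: perm_map.
  have enum_ord_uniq : uniq (enum 'I_n) by exact: enum_uniq.
  apply: uniq_perm; rewrite ?(map_inj_uniq (@perm_inj _ s)) //.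
  move=> i; rewrite mem_enum; apply/mapP.
  by exists ((s^-1)%g i); rewrite ?mem_enum ?permKV.
have uniq_seqs : uniq (map (@perm_seq n) (enum {perm 'I_n})).
  by rewrite map_inj_uniq //; exact: enum_uniq.
have seqs_sub : {subset map (@perm_seq n) (enum {perm 'I_n}) <= permutations (iota 0 n)}.
  by move=> t /mapP[s _ ->]; rewrite mem_permutations.
have [] := uniq_min_size uniq_seqs seqs_sub.
  by rewrite size_map -cardE card_Sn size_permutations ?iota_uniq ?size_iota.
move=> _ same_mem.
by apply: uniq_perm; rewrite ?permutations_uniq.
Qed.

Section Ranks.
Variable g : nat -> nat.

Definition rank5 (j : nat) : nat := #|[set j' : 'I_5 | g j' < g j]|.

Lemma ltn_rank5 a b : a < 5 -> (g a < g b) = (rank5 a < rank5 b).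
Proof.
move=> a_lt; case: (ltnP (g a) (g b)) => [ga_lt | gb_le]; apply/esym.
  apply: proper_card; apply/properP; split.
    by apply/subsetP => j; rewrite !inE => /ltn_trans; apply.
  by exists (inord a); rewrite !inE inordK // ltnn.
apply/negbTE; rewrite -leqNgt; apply: subset_leq_card.
by apply/subsetP => j; rewrite !inE => /leq_trans; apply.
Qed.

Lemma rank5_lt j : j < 5 -> rank5 j < 5.
Proof.
move=> j_lt; rewrite -[5]card_ord; apply: proper_card; apply/properP.
by split; [apply/subset_predT | exists (inord j); rewrite ?inE ?inordK ?ltnn].
Qed.

End Ranks.

(* A shape [sh] encodes the tree on {0,...,4} rooted at 4 in which [nth 0 sh u] is the
   parent of [u < 4]. *)
Definition shape_ok (sh : seq nat) : bool :=
  all (fun u => u < nth 0 sh u <= 4) (iota 0 4).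

Lemma shape_okP sh : shape_ok sh -> forall u, u < 4 -> u < nth 0 sh u <= 4.
Proof. by move=> /allP sh_ok u u_lt; apply: sh_ok; rewrite mem_iota. Qed.

Definition shape_partition (sh : seq nat) (h : nat -> nat) : bool :=
  all (fun u => h u < h (nth 0 sh u)) (iota 0 4).

Definition shapeA := [:: 3; 3; 4; 4].
Definition shapeB := [:: 2; 3; 4; 4].
Definition shapeC := [:: 3; 3; 3; 4].
Definition shapeD := [:: 2; 3; 3; 4].
Definition shapeE := [:: 2; 2; 3; 4].

Lemma shapes_ok :
  [/\ shape_ok shapeA, shape_ok shapeB, shape_ok shapeC, shape_ok shapeD
    & shape_ok shapeE].
Proof. by []. Qed.

Lemma shape_partition_lt_top sh h : shape_ok sh -> shape_partition sh h ->
  forall u, u < 4 -> h u < h 4.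
Proof.
move=> sh_ok /allP h_part.
suff lt_top d u : 4 - u <= d -> u < 4 -> h u < h 4 by move=> u; apply: lt_top (leqnn _).
elim: d u => [|d IHd] u u_dist u_lt; first by lia.
have h_up : h u < h (nth 0 sh u) by apply: h_part; rewrite mem_iota.
have /andP[lt_up up_le] := shape_okP sh_ok u_lt.
case: (ltnP (nth 0 sh u) 4) => [up_lt | up_ge].
  by apply: ltn_trans h_up (IHd _ _ up_lt); lia.
by rewrite (_ : 4 = nth 0 sh u) //; lia.
Qed.

Definition shape_nchildren (sh : seq nat) (w : nat) : nat :=
  count (fun u => nth 0 sh u == w) (iota 0 4).

Definition shape_leaf_count (sh : seq nat) : nat :=
  count (fun w => shape_nchildren sh w == 0) (iota 0 4).

Definition shape_one_sibling_leaf_count (sh : seq nat) : nat :=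
  count (fun w => (shape_nchildren sh w == 0) && (shape_nchildren sh (nth 0 sh w) == 2))
        (iota 0 4).

Definition relation_lhs (h : nat -> nat) : nat :=
  shape_partition shapeB h + shape_partition shapeC h + shape_partition shapeE h.

Definition relation_rhs (h : nat -> nat) : nat :=
  shape_partition shapeA h + (shape_partition shapeD h).*2.

Definition order_invariant (phi : (nat -> nat) -> nat) : Prop :=
  forall h h', (forall u v, u < 5 -> v < 5 -> (h u < h v) = (h' u < h' v)) ->
  phi h = phi h'.

Lemma shape_partition_order_invariant sh :
  shape_ok sh -> order_invariant (shape_partition sh).
Proof.
move=> /allP sh_ok h h' same_order; congr (nat_of_bool _); apply: eq_in_all => u u_lt /=.
have /andP[lt_u le_4] := sh_ok u u_lt.
by move: u_lt; rewrite mem_iota => u_lt; apply: same_order; lia.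
Qed.

Lemma relation_lhs_order_invariant : order_invariant relation_lhs.
Proof.
case: shapes_ok => _ okB okC _ okE h h' same_order.
by rewrite /relation_lhs !(shape_partition_order_invariant _ same_order).
Qed.

Lemma relation_rhs_order_invariant : order_invariant relation_rhs.
Proof.
case: shapes_ok => okA _ _ okD _ h h' same_order.
by rewrite /relation_rhs !(shape_partition_order_invariant _ same_order).
Qed.

Definition symmetrize (phi : (nat -> nat) -> nat) (r : seq nat) : nat :=
  sumn [seq phi (fun i => nth 0 r (nth 0 t i)) | t <- permutations (iota 0 5)].

Lemma symmetrized_relation_small a b c d e : a < 5 -> b < 5 -> c < 5 -> d < 5 -> e < 5 ->
  symmetrize relation_lhs [:: a; b; c; d; e] = symmetrize relation_rhs [:: a; b; c; d; e].
Proof.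
have check : all (fun a => all (fun b => all (fun c => all (fun d => all (fun e =>
    symmetrize relation_lhs [:: a; b; c; d; e] ==
    symmetrize relation_rhs [:: a; b; c; d; e])
  (iota 0 5)) (iota 0 5)) (iota 0 5)) (iota 0 5)) (iota 0 5).
  by vm_compute.
have in5 x : x < 5 -> x \in iota 0 5 by rewrite mem_iota.
move=> /in5 ha /in5 hb /in5 hc /in5 hd /in5 he; apply/eqP.
by move: check => /allP/(_ a ha)/allP/(_ b hb)/allP/(_ c hc)/allP/(_ d hd)/allP/(_ e he).
Qed.

Lemma sum_perm5_symmetrize phi (g : nat -> nat) : order_invariant phi ->
  \sum_(s : {perm 'I_5}) phi (fun i => g (s (inord i))) =
  symmetrize phi [seq rank5 g j | j <- iota 0 5].
Proof.
move=> phi_inv.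
have rank_entry (s : {perm 'I_5}) i : i < 5 ->
    nth 0 [seq rank5 g j | j <- iota 0 5] (nth 0 (perm_seq s) i) = rank5 g (s (inord i)).
  move=> i_lt; have -> : nth 0 (perm_seq s) i = s (inord i) by rewrite -nth_perm_seq inordK.
  by rewrite (nth_map 0) ?nth_iota ?size_iota ?ltn_ord.
rewrite /symmetrize sumnE big_map -(perm_big _ (perm_seq_permutations 5)) big_map big_enum.
apply: eq_bigr => s _; apply: phi_inv => u v u_lt v_lt.
by rewrite !rank_entry // ltn_rank5.
Qed.

Lemma symmetrized_relation (g : nat -> nat) :
  \sum_(s : {perm 'I_5}) relation_lhs (fun i => g (s (inord i))) =
  \sum_(s : {perm 'I_5}) relation_rhs (fun i => g (s (inord i))).
Proof.
rewrite (sum_perm5_symmetrize _ relation_lhs_order_invariant).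
rewrite (sum_perm5_symmetrize _ relation_rhs_order_invariant) /=.
by apply: symmetrized_relation_small; apply: rank5_lt.
Qed.

Section SpineTrees.
Variable n0 : nat.
Local Notation N := n0.+4.+1.

Definition spine_tree (sh : seq nat) : parent_fun N :=
  [ffun v : 'I_N => if v < 4 then Some (inord (nth 0 sh v))
                    else if v.+1 < N then Some (inord v.+1) else None].

Lemma spine_tree_increasing sh v w : shape_ok sh -> spine_tree sh v = Some w -> v < w.
Proof.
move=> sh_ok; rewrite ffunE; case: ifP => v_lt.
  by case=> <-; have /andP[lt_v le_4] := shape_okP sh_ok v_lt; rewrite inordK; lia.
by case: ifP => // v_succ [<-]; rewrite inordK.
Qed.

Lemma spine_tree_rooted sh : shape_ok sh -> is_rooted_tree (spine_tree sh).
Proof.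
move=> sh_ok; apply/andP; split; last first.
  apply/forallP => v; apply/eqP/iter_parent_increasing => v' w.
  exact: spine_tree_increasing.
apply/existsP; exists ord_max; apply/forallP => -[v v_lt]; rewrite ffunE -val_eqE /=.
case: ifP => [v_lt4 | v_ge4]; last case: ifP => [v_succ | v_last].
- by rewrite (_ : v == n0.+4 = false) //; apply/eqP; lia.
- by rewrite (_ : v == n0.+4 = false) //; apply/eqP; lia.
- by rewrite (_ : v == n0.+4 = true) //; apply/eqP; lia.
Qed.

Definition bottom k (f : {ffun 'I_N -> 'I_k}) (i : nat) : nat := f (inord i).

Definition spine_increasing_from k (v0 : nat) (f : {ffun 'I_N -> 'I_k}) : bool :=
  [forall u : 'I_N, ((v0 <= u) && (u.+1 < N)) ==> (f u < f (inord u.+1))].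

(* When [n0 = 0] there is no vertex 5, and [inord 5] would be a junk vertex. *)
Definition bottom_below_vertex5 k (f : {ffun 'I_N -> 'I_k}) : bool :=
  (5 < N) ==> [forall u : 'I_N, (u < 5) ==> (f u < f (inord 5))].

Lemma is_Tpartition_spine_tree sh k (f : {ffun 'I_N -> 'I_k}) : shape_ok sh ->
  is_Tpartition (spine_tree sh) f = shape_partition sh (bottom f) && spine_increasing_from 4 f.
Proof.
move=> sh_ok; rewrite is_TpartitionE; apply/forallP/andP => [f_part | []].
  split.
    apply/allP => u; rewrite mem_iota => /andP[_ u_lt].
    by have := f_part (inord u); rewrite ffunE inordK ?u_lt //; lia.
  apply/forallP => u; apply/implyP => /andP[u_ge u_succ].
  by have := f_part u; rewrite ffunE ltnNge u_ge /= u_succ.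
move=> /allP bottom_part /forallP spine_incr u; rewrite ffunE; case: ifP => [u_lt | u_ge].
  by have := bottom_part u; rewrite mem_iota u_lt /= => /(_ isT); rewrite /bottom inord_val.
by case: ifP => // u_succ; have := spine_incr u; rewrite u_succ andbT leqNgt u_ge.
Qed.

Lemma spine_increasing_from4 sh k (f : {ffun 'I_N -> 'I_k}) : shape_ok sh ->
  shape_partition sh (bottom f) ->
  spine_increasing_from 4 f = bottom_below_vertex5 f && spine_increasing_from 5 f.
Proof.
move=> sh_ok f_part; have lt_top := shape_partition_lt_top sh_ok f_part.
apply/idP/andP => [/forallP incr4 | [/implyP below5 /forallP incr5]].
  split; last first.
    by apply/forallP => u; apply/implyP => /andP[u_ge u_succ]; apply: (implyP (incr4 u)); lia.
  apply/implyP => N_gt5; apply/forallP => u; apply/implyP => u_lt.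
  have f4_lt : f (inord 4) < f (inord 5) by have := incr4 (inord 4); rewrite inordK // N_gt5.
  case: (ltnP u 4) => [u_lt4 | u_ge4].
    by apply: ltn_trans f4_lt; have := lt_top u u_lt4; rewrite /bottom inord_val.
  by rewrite (_ : u = inord 4) //; apply/val_inj; rewrite /= inordK; lia.
apply/forallP => u; apply/implyP => /andP[u_ge u_succ].
case: (ltnP u 5) => [u_lt | u_ge5]; last by apply: (implyP (incr5 u)); rewrite u_ge5.
have u4 : (u : nat) = 4 by lia.
by rewrite u4; have := forallP (below5 _) u; rewrite u_lt; apply; lia.
Qed.

Definition has_content (m : seq nat) (f : {ffun 'I_N -> 'I_(size m)}) : bool :=
  [forall i : 'I_(size m), #|[set u : 'I_N | f u == i]| == nth 0 m i].

Definition spine_weight (m : seq nat) (f : {ffun 'I_N -> 'I_(size m)}) : nat :=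
  [&& bottom_below_vertex5 f, spine_increasing_from 5 f & has_content f].

Lemma coefF_spine_tree sh m : shape_ok sh ->
  coefF (spine_tree sh) m =
  \sum_(f : {ffun 'I_N -> 'I_(size m)}) spine_weight f * shape_partition sh (bottom f).
Proof.
move=> sh_ok; rewrite /coefF -sum1dep_card big_mkcond /=; apply: eq_bigr => f _.
rewrite is_Tpartition_spine_tree //; case f_part: (shape_partition sh (bottom f)).
  by rewrite (spine_increasing_from4 sh_ok f_part) /= -andbA muln1.
by rewrite /= muln0.
Qed.

Definition extend5 (s : {perm 'I_5}) (v : 'I_N) : 'I_N :=
  if v < 5 then inord (s (inord v)) else v.

Lemma extend5_lt5 s v : (extend5 s v < 5) = (v < 5).
Proof.
rewrite /extend5; case: ifP => // v_lt.
by rewrite inordK ?ltn_ord //; have := ltn_ord (s (inord v)); lia.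
Qed.

Lemma extend5_inj s : injective (extend5 s).
Proof.
have lt_N (x : 'I_5) : x < N by have := ltn_ord x; lia.
move=> v w; rewrite /extend5; case: (ltnP v 5) => v_lt; case: (ltnP w 5) => w_lt //.
- move=> /(congr1 val) /=; rewrite !inordK ?lt_N // => /val_inj /perm_inj /(congr1 val).
  by rewrite /= !inordK // => /val_inj.
- by move=> /(congr1 val) /=; rewrite inordK ?lt_N //; have := ltn_ord (s (inord v)); lia.
- by move=> /(congr1 val) /=; rewrite inordK ?lt_N //; have := ltn_ord (s (inord w)); lia.
Qed.

Definition relabel k (s : {perm 'I_5}) (f : {ffun 'I_N -> 'I_k}) : {ffun 'I_N -> 'I_k} :=
  [ffun v => f (perm (@extend5_inj s) v)].

Lemma relabel_inj k s : injective (@relabel k s).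
Proof.
move=> f g /ffunP eq_fg; apply/ffunP => v.
by have := eq_fg ((perm (@extend5_inj s))^-1 v)%g; rewrite !ffunE permKV.
Qed.

Lemma bottom_relabel k s (f : {ffun 'I_N -> 'I_k}) i :
  i < 5 -> bottom (relabel s f) i = bottom f (s (inord i)).
Proof. by move=> i_lt; rewrite /bottom ffunE permE /extend5 inordK ?i_lt //; lia. Qed.

Lemma spine_weight_relabel m s (f : {ffun 'I_N -> 'I_(size m)}) :
  spine_weight (relabel s f) = spine_weight f.
Proof.
set e := perm (@extend5_inj s).
have e_big (v : 'I_N) : 5 <= v -> e v = v by rewrite permE /extend5 leqNgt => /negbTE ->.
rewrite /spine_weight; congr (nat_of_bool [&& _, _ & _]).
- rewrite /bottom_below_vertex5; case: (ltnP 5 N) => //= N_gt5.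
  have e5 : e (inord 5) = inord 5 by rewrite e_big // inordK.
  apply/forallP/forallP => below5 u; apply/implyP => u_lt.
    have einv_lt : (e^-1)%g u < 5.
      by have := permKV e u; rewrite permE -(extend5_lt5 s) => ->.
    by have := implyP (below5 ((e^-1)%g u)) einv_lt; rewrite !ffunE permKV e5.
  by rewrite !ffunE e5; apply: (implyP (below5 (e u))); rewrite permE extend5_lt5.
- apply: eq_forallb => u; case: (ltnP u 5) => //= u_ge; case: (ltnP u.+1 N) => //= u_succ.
  by rewrite !ffunE !e_big // inordK //; lia.
- apply: eq_forallb => i; congr (_ == _).
  rewrite -[RHS](card_preimset _ (@perm_inj _ e)).
  by apply: eq_card => u; rewrite !inE ffunE.
Qed.

Lemma sum_spine_weight_symmetrize m phi : order_invariant phi ->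
  5`! * \sum_(f : {ffun 'I_N -> 'I_(size m)}) spine_weight f * phi (bottom f) =
  \sum_(f : {ffun 'I_N -> 'I_(size m)})
     spine_weight f * \sum_(s : {perm 'I_5}) phi (fun i => bottom f (s (inord i))).
Proof.
move=> phi_inv; rewrite -card_Sn -sum_nat_const.
transitivity (\sum_(s : {perm 'I_5}) \sum_(f : {ffun 'I_N -> 'I_(size m)})
                spine_weight f * phi (fun i => bottom f (s (inord i)))); last first.
  by rewrite exchange_big /=; apply: eq_bigr => f _; rewrite big_distrr.
apply: eq_bigr => s _.
rewrite (reindex_inj (@relabel_inj _ s)) /=; apply: eq_bigr => f _.
rewrite spine_weight_relabel; congr (_ * _); apply: phi_inv => u v u_lt v_lt.
by rewrite !bottom_relabel.
Qed.

Lemma coefF_spine_relation m :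
  coefF (spine_tree shapeB) m + coefF (spine_tree shapeC) m + coefF (spine_tree shapeE) m =
  coefF (spine_tree shapeA) m + (coefF (spine_tree shapeD) m).*2.
Proof.
case: shapes_ok => okA okB okC okD okE.
rewrite !coefF_spine_tree // -!big_split -muln2 big_distrl -big_split /=.
apply/eqP; rewrite -(eqn_pmul2l (isT : 0 < 5`!)); apply/eqP.
transitivity (5`! * \sum_(f : {ffun 'I_N -> 'I_(size m)}) spine_weight f * relation_lhs (bottom f)).
  by congr (_ * _); apply: eq_bigr => f _; rewrite /relation_lhs !mulnDr.
transitivity (5`! * \sum_(f : {ffun 'I_N -> 'I_(size m)}) spine_weight f * relation_rhs (bottom f)).
  rewrite (sum_spine_weight_symmetrize m relation_lhs_order_invariant).
  rewrite (sum_spine_weight_symmetrize m relation_rhs_order_invariant).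
  by apply: eq_bigr => f _; rewrite symmetrized_relation.
by congr (_ * _); apply: eq_bigr => f _; rewrite /relation_rhs mulnDr -muln2 mulnA.
Qed.

Lemma nchildren_spine_tree sh w : shape_ok sh -> w < 5 ->
  nchildren (spine_tree sh) (inord w) = shape_nchildren sh w.
Proof.
move=> sh_ok w_lt; rewrite /nchildren (@card_set_ord_below _ _ 4) //.
  apply: eq_in_count => u; rewrite mem_iota /= => u_lt.
  have /andP[lt_up up_le] := shape_okP sh_ok u_lt.
  rewrite ffunE inordK ?u_lt; last by lia.
  by apply/eqP/eqP => [[/(congr1 (@nat_of_ord _))] | ->]; rewrite ?inordK //; lia.
move=> u; rewrite ffunE; case: ifP => // u_ge; case: ifP => // u_succ.
by move=> /eqP [/(congr1 (@nat_of_ord _))]; rewrite !inordK //; lia.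
Qed.

Lemma nchildren_spine_tree_gt0 sh (w : 'I_N) : shape_ok sh -> 4 <= w ->
  nchildren (spine_tree sh) w != 0.
Proof.
move=> sh_ok w_ge; rewrite -lt0n card_gt0; apply/set0Pn.
exists (inord w.-1); rewrite inE ffunE inordK; last by have := ltn_ord w; lia.
case: ifP => [w_pred_lt | _].
  have /andP[lt_up up_le] := shape_okP sh_ok w_pred_lt.
  by apply/eqP; congr Some; apply/val_inj; rewrite /= inordK; lia.
by rewrite prednK ?ltn_ord ?inord_val //; lia.
Qed.

Lemma spine_tree_invariants sh : shape_ok sh ->
  leaf_count (spine_tree sh) = shape_leaf_count sh /\
  one_sibling_leaf_count (spine_tree sh) = shape_one_sibling_leaf_count sh.
Proof.
move=> sh_ok.
have leaf_lt (w : 'I_N) : nchildren (spine_tree sh) w == 0 -> w < 4.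
  by apply: contraLR; rewrite -leqNgt; apply: nchildren_spine_tree_gt0.
rewrite /leaf_count /one_sibling_leaf_count; split.
  rewrite (@card_set_ord_below _ _ 4) //; apply: eq_in_count => u; rewrite mem_iota => u_lt.
  by rewrite nchildren_spine_tree //; lia.
rewrite (@card_set_ord_below _ _ 4) // => [|w /andP[/leaf_lt] //].
apply: eq_in_count => u; rewrite mem_iota add0n => /andP[_ u_lt].
have /andP[lt_up up_le] := shape_okP sh_ok u_lt.
by rewrite ffunE inordK ?u_lt ?nchildren_spine_tree //; lia.
Qed.

Lemma spine_trees_not_iso sh1 sh2 : shape_ok sh1 -> shape_ok sh2 ->
  (shape_leaf_count sh1 != shape_leaf_count sh2) ||
  (shape_one_sibling_leaf_count sh1 != shape_one_sibling_leaf_count sh2) ->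
  ~~ rtree_iso (spine_tree sh1) (spine_tree sh2).
Proof.
move=> ok1 ok2 differ; apply/negP => /rtree_iso_invariants [].
case: (spine_tree_invariants ok1) (spine_tree_invariants ok2) => -> -> [-> ->] eq1 eq2.
by move: differ; rewrite eq1 eq2 !eqxx.
Qed.

End SpineTrees.

Import GRing.Theory.
Local Open Scope ring_scope.

Theorem mainTheorem7 (n : nat) (hn : (5 <= n)%N) :
  exists s : seq (parent_fun n * rat),
    all (fun tc => is_rooted_tree tc.1) s /\
    pairwise (fun a b => ~~ rtree_iso a.1 b.1) s /\
    has (fun tc => tc.2 != 0) s /\
    forall m : seq nat, \sum_(tc <- s) tc.2 * (coefF tc.1 m)%:R = 0.
Proof.
have -> : n = (n - 5).+4.+1 by lia.
set n0 := (n - 5)%N; set T := spine_tree n0.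
exists [:: (T shapeA, -1); (T shapeB, 1); (T shapeC, 1); (T shapeD, -2); (T shapeE, 1)].
case: shapes_ok => okA okB okC okD okE.
split; first by rewrite /= !spine_tree_rooted.
split; first by rewrite /= !spine_trees_not_iso.
split=> // m; rewrite !big_cons big_nil /=.
have := congr1 (fun k : nat => k%:R : rat) (coefF_spine_relation n0 m).
rewrite -addnn !natrD.
by move=> relation; lra.
Qed.
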